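(* Let $q$ be a prime power, $k,m$ positive integers with $km$ even, $V=\mathbb F_{q^m}^k$, and let $U$ be a scattered $[\frac{km}{2},k]_{q^m/q}$ system. Then the following are equivalent: (1) $U$ is $(2,m-1)_q$-evasive; (2) $U^{\tau'}$ is a $\left(k-2,\frac{km}{2}-m-1\right)_q$-evasive $[\frac{km}{2},k]_{q^m/q}$ system; (3) $U^{\tau'}$ is a cutting $[\frac{km}{2},k]_{q^m/q}$ system.
   Context: An $[n,k]_{q^m/q}$ system is an $\mathbb F_q$-subspace $U$ of $\mathbb F_{q^m}^k$ with $\dim_{\mathbb F_q}(U)=n$ and $\langle U\rangle_{\mathbb F_{q^m}}=\mathbb F_{q^m}^k$. It is $(h,r)_q$-evasive if $\dim_{\mathbb F_q}(U\cap H)\le r$ for every $h$-dimensional $\mathbb F_{q^m}$-subspace $H$; scattered means $(1,1)_q$-evasive; cutting means $\langle H\cap U\rangle_{\mathbb F_{q^m}}=H$ for every $\mathbb F_{q^m}$-hyperplane $H$. Let $\sigma:V\times V\to\mathbb F_{q^m}$ be a nondegenerate $\mathbb F_{q^m}$-bilinear form and $\sigma'(u,v)=\mathrm{Tr}_{q^m/q}(\sigma(u,v))$, a nondegenerate $\mathbb F_q$-bilinear form on $V$ viewed as a $km$-dimensional $\mathbb F_q$-space. $U^{\tau'}$ denotes the orthogonal complement of $U$ with respect to $\sigma'$ (the dual of $U$). *)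

From HB Require Import structures.
From mathcomp Require Import all_boot all_order all_algebra all_field.
Set Implicit Arguments. Unset Strict Implicit. Unset Printing Implicit Defensive.
Import Order.TTheory GRing.Theory Num.Theory.
Local Open Scope ring_scope.

(* Setting: F = F_q a finite field, L = F_{q^m} a finite extension of F of
   degree m = \dim {:L}.  The ambient space V = F_{q^m}^k is modelled as
   {ffun 'I_k -> L}, which carries the canonical F-vector space (vectType F)
   structure; U is then an F-subspace {vspace (Vk L k)}. *)

Definition Vk (F : finFieldType) (L : fieldExtType F) (k : nat) :=
  {ffun 'I_k -> L}.

Section Defs.
Variables (F : finFieldType) (L : fieldExtType F) (k : nat).
Local Notation V := (Vk L k).

Definition extdeg := \dim {: L}.

Definition Lscale (a : L) (v : V) : V := [ffun i => a * v i].

(* an F-subspace is an F_{q^m}-subspace iff it is closed under F_{q^m}-scaling *)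
Definition Lclosed (H : {vspace V}) : Prop :=
  forall (a : L) (v : V), v \in H -> Lscale a v \in H.

Definition is_Lspan (W H : {vspace V}) : Prop :=
  [/\ Lclosed H, (W <= H)%VS &
      forall H' : {vspace V}, Lclosed H' -> (W <= H')%VS -> (H <= H')%VS].

Definition Ldim_eq (H : {vspace V}) (h : int) : Prop :=
  (\dim H)%:Z = h * (extdeg%:Z).

Definition is_system (U : {vspace V}) (n : nat) : Prop :=
  \dim U = n /\ is_Lspan U fullv.

Definition evasive (U : {vspace V}) (h r : int) : Prop :=
  forall H : {vspace V}, Lclosed H -> Ldim_eq H h -> (\dim (U :&: H))%:Z <= r.

Definition scattered (U : {vspace V}) : Prop := evasive U 1 1.

Definition cutting (U : {vspace V}) : Prop :=
  forall H : {vspace V}, Lclosed H -> Ldim_eq H (k%:Z - 1) -> is_Lspan (H :&: U) H.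

Definition trace (x : L) : L := \sum_(i < extdeg) x ^+ (#|F| ^ i).

Definition Lbilinear (s : V -> V -> L) : Prop :=
  [/\ forall u u' v, s (u + u') v = s u v + s u' v,
      forall u v v', s u (v + v') = s u v + s u v',
      forall a u v, s (Lscale a u) v = a * s u v &
      forall a u v, s u (Lscale a v) = a * s u v].

Definition nondeg_form (s : V -> V -> L) : Prop :=
  (forall u, (forall v, s u v = 0) -> u = 0) /\
  (forall v, (forall u, s u v = 0) -> v = 0).

(* W = U^{tau'}: orthogonal complement of U w.r.t. sigma' = Tr o sigma *)
Definition is_dual (s : V -> V -> L) (U W : {vspace V}) : Prop :=
  forall v : V, v \in W <-> (forall u : V, u \in U -> trace (s u v) = 0).

End Defs.

Set Warnings "-notation-overridden -ambiguous-paths -deprecated -redundant-canonical-projection".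
From HB Require Import structures.
From mathcomp Require Import all_boot all_order all_algebra all_field all_solvable zify ring.
Import Order.TTheory GRing.Theory Num.Theory.
Local Open Scope ring_scope.
Set Implicit Arguments. Unset Strict Implicit. Unset Printing Implicit Defensive.

(* The trace form sigma' = Tr o sigma is a nondegenerate F_q-bilinear form with
   sigma'(a u, v) = sigma'(u, a v), so orthogonality maps F_{q^m}-subspaces of
   dimension h bijectively onto F_{q^m}-subspaces of dimension k - h, and for
   W = U^perp one has dim (W :&: H^perp) = km - dim (U + H).  Since
   dim U = km/2, this turns dim (U :&: H) <= m - 1 for 2-dimensional H into
   dim (W :&: H^perp) <= km/2 - m - 1, which is (1) <-> (2).
   If W is not cutting, <H :&: W> lies in a proper F_{q^m}-subspace of some
   hyperplane H, hence in a (k-2)-dimensional T <= H, whereas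
   dim (H :&: W) >= km/2 - m.  Conversely, if dim (W :&: T) >= km/2 - m for a
   (k-2)-dimensional T, the q^m hyperplanes T + <v2 + a v1> of a pencil through
   T each contain a nonzero vector of a complement of W :&: T in W, all of them
   distinct, which is impossible in dimension at most m.
   Scatteredness is used only to show that W spans V over F_{q^m}: if W lay
   in a proper F_{q^m}-subspace H, the left orthogonal of H would be a nonzero
   F_{q^m}-subspace of U, so m = 1 and U itself would be F_{q^m}-closed. *)

Section OrthogonalComplement.
Variables (F : fieldType) (V : vectType F) (b : V -> V -> F).
Hypothesis b_linl : forall v c u u', b (c *: u + u') v = c * b u v + b u' v.
Hypothesis b_linr : forall u c v v', b u (c *: v + v') = c * b u v + b u v'.
Hypothesis b_nondegr : forall v, (forall u, b u v = 0) -> v = 0.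

Definition forml (v : V) : V -> F^o := b^~ v.
Definition formr (u : V) : V -> F^o := b u.
HB.instance Definition _ v :=
  GRing.isLinear.Build F V F^o _ (forml v) (fun c => b_linl v c).
HB.instance Definition _ u :=
  GRing.isLinear.Build F V F^o _ (formr u) (fun c => b_linr u c).

Definition orthr (X : {vspace V}) : {vspace V} :=
  (\bigcap_(i < \dim X) lker (linfun (formr (vbasis X)`_i)))%VS.

Lemma orthrP (X : {vspace V}) v :
  reflect (forall u, u \in X -> b u v = 0) (v \in orthr X).
Proof.
rewrite memvE; apply: (iffP subv_bigcapP) => [orth_basis u uX | orth_X i _].
  rewrite (coord_vbasis uX) -[b _ v]/(forml v _) linear_sum big1 // => i _.
  have := orth_basis i isT; rewrite -memvE memv_ker lfunE /= => /eqP.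
  by rewrite linearZ /= /forml /formr => ->; rewrite mulr0.
by rewrite -memvE memv_ker lfunE /= /formr orth_X ?vbasis_mem ?memt_nth.
Qed.

Lemma dimv_lker_form u : (\dim {:V} <= \dim (lker (linfun (formr u))) + 1)%N.
Proof.
have := limg_ker_dim (linfun (formr u)) fullv; rewrite capfv => <-.
by rewrite leq_add2l (leq_trans (dimvS (subvf _))) // dimvf.
Qed.

Lemma dimv_bigcap_ge n (K : 'I_n -> {vspace V}) :
  (forall i, \dim {:V} <= \dim (K i) + 1)%N ->
  (\dim {:V} <= \dim (\bigcap_(i < n) K i)%VS + n)%N.
Proof.
elim: n K => [|n IHn] K codim_K; first by rewrite big_ord0 addn0.
rewrite big_ord_recr /=.
have := IHn (fun i => K (widen_ord (leqnSn n) i)) (fun i => codim_K _).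
have := codim_K ord_max; set A := (\bigcap_(i < n) _)%VS; set B := K ord_max.
have := dimv_sum_cap A B; have := dimvS (subvf (A + B)); lia.
Qed.

Lemma orthrS (X Y : {vspace V}) : (X <= Y)%VS -> (orthr Y <= orthr X)%VS.
Proof.
move=> sXY; apply/subvP => v /orthrP orth_Y.
by apply/orthrP => u /(subvP sXY); apply: orth_Y.
Qed.

Lemma orthr_full : orthr fullv = 0%VS.
Proof.
apply/vspaceP => v; rewrite memv0; apply/orthrP/eqP => [orth_v|->].
  by apply: b_nondegr => u; apply: orth_v; rewrite memvf.
by move=> u _; apply: (linear0 (formr u)).
Qed.

Lemma orthr_add (X Y : {vspace V}) : orthr (X + Y) = (orthr X :&: orthr Y)%VS.
Proof.
apply/vspaceP => v; rewrite memv_cap; apply/orthrP/andP => [orth_v|].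
  split; apply/orthrP => u u_in; apply: orth_v.
    by rewrite (subvP (addvSl X Y)).
  by rewrite (subvP (addvSr X Y)).
case=> /orthrP orth_X /orthrP orth_Y u /memv_addP[x xX [y yY ->]].
by rewrite -[x]scale1r b_linl orth_X // orth_Y // mulr0 addr0.
Qed.

Lemma dim_orthr (X : {vspace V}) : \dim (orthr X) = (\dim {:V} - \dim X)%N.
Proof.
have orthr_ge Y : (\dim {:V} <= \dim (orthr Y) + \dim Y)%N.
  by apply: dimv_bigcap_ge => i; apply: dimv_lker_form.
have := orthr_ge X; have := orthr_ge X^C%VS; have := dimv_compl X.
have := dimv_sum_cap (orthr X) (orthr X^C%VS).
rewrite -orthr_add addv_complf orthr_full dimv0 addn0.
have := dimvS (subvf (orthr X + orthr X^C%VS)); have := dimvS (subvf X); lia.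
Qed.

End OrthogonalComplement.

Section Biorthogonality.
Variables (F : fieldType) (V : vectType F) (b : V -> V -> F).
Hypothesis b_linl : forall v c u u', b (c *: u + u') v = c * b u v + b u' v.
Hypothesis b_linr : forall u c v v', b u (c *: v + v') = c * b u v + b u v'.
Hypothesis b_nondegl : forall u, (forall v, b u v = 0) -> u = 0.
Hypothesis b_nondegr : forall v, (forall u, b u v = 0) -> v = 0.

Definition orthl (X : {vspace V}) : {vspace V} := orthr (fun u v => b v u) X.

Lemma orthlP (X : {vspace V}) u :
  reflect (forall v, v \in X -> b u v = 0) (u \in orthl X).
Proof. exact: orthrP. Qed.

Lemma orthlS (X Y : {vspace V}) : (X <= Y)%VS -> (orthl Y <= orthl X)%VS.
Proof. exact: orthrS. Qed.

Lemma dim_orthl (X : {vspace V}) : \dim (orthl X) = (\dim {:V} - \dim X)%N.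
Proof. exact: dim_orthr. Qed.

Lemma orthrK (X : {vspace V}) : orthl (orthr b X) = X.
Proof.
apply/eqP; rewrite eq_sym eqEdim dim_orthl (dim_orthr b_linl b_linr b_nondegr).
rewrite subKn ?dimvS ?subvf ?leqnn ?andbT //.
apply/subvP => u uX; apply/orthlP => v /(orthrP b_linl b_linr); exact.
Qed.

Lemma orthlK (Y : {vspace V}) : orthr b (orthl Y) = Y.
Proof.
apply/eqP; rewrite eq_sym eqEdim (dim_orthr b_linl b_linr b_nondegr) dim_orthl.
rewrite subKn ?dimvS ?subvf ?leqnn ?andbT //.
apply/subvP => v vY; apply/(orthrP b_linl b_linr) => u /orthlP; exact.
Qed.

End Biorthogonality.

Section Trace.
Variables (F : finFieldType) (L : fieldExtType F).
Local Notation q := #|F|.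
Local Notation m := (\dim {:L}).

Lemma pchar_nat_card : [pchar L].-nat q.
Proof.
have [p _ pcharFp] := finPcharP F.
have := abelem_pgroup (fin_ring_pchar_abelem pcharFp).
rewrite pgroupE cardsT => p_nat_q.
have pcharLp : p \in [pchar L] by rewrite (pchar_lalg L).
by rewrite (eq_pnat _ (pcharf_eq pcharLp)).
Qed.

Lemma exprD_card_exp (x y : L) i : (x + y) ^+ (q ^ i) = x ^+ (q ^ i) + y ^+ (q ^ i).
Proof. by apply: exprDn_pchar; rewrite pnatX pchar_nat_card. Qed.

Lemma traceD (x y : L) : trace (x + y) = trace x + trace y.
Proof. by rewrite /trace -big_split; apply: eq_bigr => i _; apply: exprD_card_exp. Qed.

Lemma traceZ (c : F) (x : L) : trace (c *: x) = c *: trace x.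
Proof.
have c_fixed i : c ^+ (q ^ i) = c.
  by elim: i => [|i IHi]; rewrite ?expn0 ?expr1 // expnSr exprM IHi expf_card.
by rewrite /trace scaler_sumr; apply: eq_bigr => i _; rewrite exprZn c_fixed.
Qed.

(* The q-th power permutes the summands of the trace cyclically, and 1%VS is
   the fixed field of that power. *)
Lemma trace_mem1 (x : L) : trace x \in (1%VS : {vspace L}).
Proof.
rewrite (Fermat's_little_theorem 1%AS) dimv1 expn1.
have x_fixed : x ^+ (q ^ m) = x.
  by apply/eqP; rewrite -(Fermat's_little_theorem (aspacef L)) memvf.
have zero_pow : (0 : L) ^+ (q ^ 1) = 0.
  by rewrite expr0n expn1 (negbTE (lt0n_neq0 (ltnW (finNzRing_gt1 F)))).
rewrite /trace /extdeg -[X in _ ^+ X]expn1.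
rewrite (big_morph _ (fun y z => exprD_card_exp y z 1) zero_pow).
under eq_bigr => i _ do rewrite -exprM -expnSr.
case Em: m (adim_gt0 (aspacef L)) => [|n] // _.
by rewrite big_ord_recr big_ord_recl /= -Em x_fixed expn0 expr1 addrC.
Qed.

Lemma card_finvect_L : #|finvect_type L| = (q ^ m)%N.
Proof.
by have := card_vspace (fullv : {vspace finvect_type L}); rewrite card_vspacef.
Qed.

(* The trace is the polynomial function of sum_(i < m) 'X^(q^i), which is
   nonzero of degree q^(m-1) < #|L|, hence cannot vanish on all of L. *)
Lemma trace_neq0 : exists x : L, trace x != 0.
Proof.
pose P : {poly L} := \sum_(i < m) 'X^(q ^ i).
have P_trace x : P.[x] = trace x.
  by rewrite horner_sum; apply: eq_bigr => i _; rewrite hornerXn.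
have q_gt1 := finNzRing_gt1 F.
case Em: m (adim_gt0 (aspacef L)) => [|n] // _.
have P_neq0 : P != 0.
  apply/eqP => /(congr1 (coefp 1)); rewrite /= coef0 /P coef_sum Em big_ord_recl.
  rewrite coefXn expn0 eqxx big1 ?addr0 => [/eqP|i _]; first by rewrite oner_eq0.
  by rewrite coefXn -(expn0 q) eqn_exp2l.
have size_P : (size P <= (q ^ n).+1)%N.
  apply: leq_trans (size_sum _ _ _) _; apply/bigmax_leqP => i _.
  by rewrite size_polyXn ltnS leq_pexp2l ?(ltnW q_gt1) // -ltnS -Em.
have [x not_root] : exists x : finvect_type L, ~~ root P x.
  apply/existsP; apply: contraR P_neq0 => /existsPn all_roots; apply/eqP.
  apply: (roots_geq_poly_eq0 (rs := enum (finvect_type L))); last 1 first.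
  - rewrite -cardE card_finvect_L Em expnS (leq_trans size_P) //.
    by rewrite ltn_Pmull ?expn_gt0 ?(ltnW q_gt1).
  - by apply/allP => y _; have := all_roots y; rewrite negbK.
  - exact: enum_uniq.
by exists x; rewrite -P_trace.
Qed.

Lemma trace_mul_nondeg (s : L) :
  (forall a, trace (a * s) = 0) -> s = 0.
Proof.
move=> trace_as; apply: contraTeq isT => s_neq0; have [y trace_y] := trace_neq0.
by move: trace_y; rewrite -(divfK s_neq0 y) trace_as eqxx.
Qed.

End Trace.

Section LSubspaces.
Variables (F : finFieldType) (L : fieldExtType F) (k : nat).
Local Notation V := (Vk L k).
Local Notation m := (\dim {:L}).
Let m_gt0 : (0 < m)%N := adim_gt0 (aspacef L).

Lemma dimVk : \dim {:V} = (k * m)%N.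
Proof. by rewrite !dimvf /dim /= card_ord. Qed.

Lemma LscaleDl a b (v : V) : Lscale (a + b) v = Lscale a v + Lscale b v.
Proof. by apply/ffunP => i; rewrite !ffunE mulrDl. Qed.

Lemma LscaleDr a (u v : V) : Lscale a (u + v) = Lscale a u + Lscale a v.
Proof. by apply/ffunP => i; rewrite !ffunE mulrDr. Qed.

Lemma LscaleA a b (v : V) : Lscale a (Lscale b v) = Lscale (a * b) v.
Proof. by apply/ffunP => i; rewrite !ffunE mulrA. Qed.

Lemma Lscale1 (v : V) : Lscale 1 v = v.
Proof. by apply/ffunP => i; rewrite !ffunE mul1r. Qed.

Lemma Lscale0 (v : V) : Lscale 0 v = 0.
Proof. by apply/ffunP => i; rewrite !ffunE mul0r. Qed.

Lemma LscaleN a (v : V) : Lscale (- a) v = - Lscale a v.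
Proof. by apply/ffunP => i; rewrite !ffunE mulNr. Qed.

Lemma scalerLscale (c : F) a (v : V) : c *: Lscale a v = Lscale (c *: a) v.
Proof. by apply/ffunP => i; rewrite !ffunE -scalerAl. Qed.

Lemma scalerE_Lscale (c : F) (v : V) : c *: v = Lscale c%:A v.
Proof. by apply/ffunP => i; rewrite !ffunE mulr_algl. Qed.

Definition Lmul (v : V) (a : L) : V := Lscale a v.

Fact Lmul_is_linear v : linear (Lmul v).
Proof. by move=> c a b; rewrite /Lmul LscaleDl scalerLscale. Qed.

HB.instance Definition _ v := GRing.isLinear.Build F L V _ (Lmul v) (Lmul_is_linear v).

Definition Lline (v : V) : {vspace V} := (linfun (Lmul v) @: fullv)%VS.

Lemma LlineP v w : reflect (exists a, w = Lscale a v) (w \in Lline v).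
Proof.
apply: (iffP memv_imgP) => [[a _ ->]|[a ->]]; first by exists a; rewrite lfunE.
by exists a; rewrite ?memvf // lfunE.
Qed.

Lemma Lline_id v : v \in Lline v.
Proof. by apply/LlineP; exists 1; rewrite Lscale1. Qed.

Lemma dim_Lline v : v != 0 -> \dim (Lline v) = m.
Proof.
move=> v_neq0; have := limg_ker_dim (linfun (Lmul v)) fullv.
suff -> : lker (linfun (Lmul v)) = 0%VS by rewrite capv0 dimv0.
apply/eqP/lker0P => a b; rewrite !lfunE /Lmul => /ffunP Eab.
have [i vi_neq0] : exists i, v i != 0.
  apply/existsP; apply: contraNT v_neq0 => /existsPn v0.
  by apply/eqP/ffunP => i; rewrite ffunE; apply/eqP/negPn.
by apply: (mulIf vi_neq0); have := Eab i; rewrite !ffunE.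
Qed.

Lemma Lclosed_Lline v : Lclosed (Lline v).
Proof. by move=> a w /LlineP[b ->]; apply/LlineP; exists (a * b); rewrite LscaleA. Qed.

Lemma Lline_sub (H : {vspace V}) v : Lclosed H -> v \in H -> (Lline v <= H)%VS.
Proof. by move=> cH vH; apply/subvP => w /LlineP[a ->]; apply: cH. Qed.

Lemma Lclosedf : Lclosed (fullv : {vspace V}).
Proof. by move=> a v _; rewrite memvf. Qed.

Lemma Lclosed0 : Lclosed (0%VS : {vspace V}).
Proof.
by move=> a v; rewrite !memv0 => /eqP ->; apply/eqP/ffunP => i; rewrite !ffunE mulr0.
Qed.

Lemma Lclosed_cap (S T : {vspace V}) : Lclosed S -> Lclosed T -> Lclosed (S :&: T).
Proof. by move=> cS cT a v; rewrite !memv_cap => /andP[/cS -> /cT ->]. Qed.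

Lemma Lclosed_add (S T : {vspace V}) : Lclosed S -> Lclosed T -> Lclosed (S + T).
Proof.
move=> cS cT a w /memv_addP[u uS [v vT ->]].
by rewrite LscaleDr memv_add ?cS ?cT.
Qed.

Lemma Lclosed_Lscale (T : {vspace V}) a v :
  Lclosed T -> a != 0 -> (Lscale a v \in T) = (v \in T).
Proof.
move=> cT a_neq0; apply/idP/idP => [/(cT a^-1)|/cT //].
by rewrite LscaleA mulVf // Lscale1.
Qed.

Lemma dim_add_Lline (T : {vspace V}) v : Lclosed T -> v \notin T ->
  \dim (T + Lline v) = (\dim T + m)%N.
Proof.
move=> cT vT; have v_neq0 : v != 0 by apply: contraNneq vT => ->; rewrite mem0v.
rewrite dimv_disjoint_sum ?dim_Lline //; apply/eqP; rewrite -subv0.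
apply/subvP => w; rewrite memv_cap memv0 => /andP[wT /LlineP[a Ew]].
have [a0|a_neq0] := eqVneq a 0; first by rewrite Ew a0 Lscale0.
by move: wT; rewrite Ew Lclosed_Lscale // (negbTE vT).
Qed.

Lemma Lclosed_proper_dim (S H : {vspace V}) : Lclosed S -> Lclosed H ->
  (S <= H)%VS -> ~~ (H <= S)%VS -> (\dim S + m <= \dim H)%N.
Proof.
move=> cS cH sSH /subvPn[v vH vS]; rewrite -(dim_add_Lline cS vS).
by apply: dimvS; rewrite subv_add sSH Lline_sub.
Qed.

Lemma Lclosed_extend j (S H : {vspace V}) : Lclosed S -> Lclosed H -> (S <= H)%VS ->
  (\dim S + j * m <= \dim H)%N ->
  exists T : {vspace V},
    [/\ Lclosed T, (S <= T)%VS, (T <= H)%VS & \dim T = (\dim S + j * m)%N].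
Proof.
move=> cS cH sSH; elim: j => [|j IHj] dim_le; first by exists S; rewrite addn0.
have [|T [cT sST sTH dimT]] := IHj.
  by apply: leq_trans dim_le; rewrite leq_add2l leq_mul2r leqnSn orbT.
have /subvPn[v vH vT] : ~~ (H <= T)%VS.
  by apply: contraTN dim_le => /dimvS; rewrite dimT mulSn; lia.
exists (T + Lline v)%VS; split.
- by apply: Lclosed_add => //; apply: Lclosed_Lline.
- exact: subv_trans sST (addvSl _ _).
- by rewrite subv_add sTH Lline_sub.
- by rewrite dim_add_Lline // dimT mulSn; lia.
Qed.

Lemma Lclosed_dvd_dim (H : {vspace V}) : Lclosed H -> (m %| \dim H)%N.
Proof.
move=> cH.
have [|T [cT _ sTH dimT]] := Lclosed_extend (j := (\dim H %/ m)%N) Lclosed0 cH (sub0v H).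
  by rewrite dimv0 leq_trunc_div.
rewrite dimv0 add0n in dimT.
have sHT : (H <= T)%VS.
  apply: contraTT (ltn_ceil (\dim H) m_gt0).
  by move/(Lclosed_proper_dim cT cH sTH); rewrite -leqNgt mulSnr -dimT.
have -> : \dim H = \dim T by apply/eqP; rewrite eqn_leq !dimvS.
by rewrite dimT dvdn_mull.
Qed.

Lemma Lclosed_extdeg1 (X : {vspace V}) : m = 1%N -> Lclosed X.
Proof.
move=> m1 a u uX; have : a \in (1%VS : {vspace L}).
  by rewrite (_ : 1%VS = fullv) ?memvf //; apply/eqP; rewrite eqEdim subvf dimv1 m1.
by case/vlineP=> c ->; rewrite -scalerE_Lscale memvZ.
Qed.

Lemma Ldim_eq_nat (H : {vspace V}) j : Ldim_eq H j%:Z <-> \dim H = (j * m)%N.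
Proof. by rewrite /Ldim_eq /extdeg -PoszM; split => [[]|->]. Qed.

Lemma Ldim_eq_subn (H : {vspace V}) a j :
  Ldim_eq H (a%:Z - j%:Z) <-> (\dim H + j * m = a * m)%N.
Proof. rewrite /Ldim_eq /extdeg mulrBl -!PoszM; split; lia. Qed.

End LSubspaces.

Section TraceForm.
Variables (F : finFieldType) (L : fieldExtType F) (k : nat).
Local Notation V := (Vk L k).
Variable sigma : V -> V -> L.
Hypothesis sigma_bil : Lbilinear sigma.
Hypothesis sigma_nondeg : nondeg_form sigma.

(* sigma' = Tr o sigma, read as an F-valued form through the coordinate on the
   basis [1] of the subfield 1%VS = F of L. *)
Definition trace_form (u v : V) : F := coord [tuple 1] 0 (trace (sigma u v)).

Lemma trace_formE u v : (trace_form u v)%:A = trace (sigma u v).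
Proof.
have /coord_span {1}-> : trace (sigma u v) \in <<[tuple (1%R : L)]>>%VS.
  by rewrite span_seq1 trace_mem1.
by rewrite big_ord1.
Qed.

Lemma trace_form_eq0 u v : (trace_form u v == 0) = (trace (sigma u v) == 0).
Proof. by rewrite -trace_formE scaler_eq0 oner_eq0 orbF. Qed.

Lemma trace_sigma_linl v c u u' :
  trace (sigma (c *: u + u') v) = c *: trace (sigma u v) + trace (sigma u' v).
Proof.
case: sigma_bil => sigmaDl _ sigmaZl _.
by rewrite sigmaDl scalerE_Lscale sigmaZl traceD mulr_algl traceZ.
Qed.

Lemma trace_sigma_linr u c v v' :
  trace (sigma u (c *: v + v')) = c *: trace (sigma u v) + trace (sigma u v').
Proof.
case: sigma_bil => _ sigmaDr _ sigmaZr.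
by rewrite sigmaDr scalerE_Lscale sigmaZr traceD mulr_algl traceZ.
Qed.

Lemma trace_form_linl v c u u' :
  trace_form (c *: u + u') v = c * trace_form u v + trace_form u' v.
Proof. by rewrite /trace_form trace_sigma_linl linearP. Qed.

Lemma trace_form_linr u c v v' :
  trace_form u (c *: v + v') = c * trace_form u v + trace_form u v'.
Proof. by rewrite /trace_form trace_sigma_linr linearP. Qed.

Lemma trace_form_Lscale a u v : trace_form (Lscale a u) v = trace_form u (Lscale a v).
Proof.
by case: sigma_bil => _ _ sigmaZl sigmaZr; rewrite /trace_form sigmaZl sigmaZr.
Qed.

Lemma trace_form_nondegl u : (forall v, trace_form u v = 0) -> u = 0.
Proof.
case: sigma_nondeg => nondegl _ orth_u; apply: nondegl => v.
apply: trace_mul_nondeg => a; case: sigma_bil => _ _ _ <-.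
by apply/eqP; rewrite -trace_form_eq0 orth_u.
Qed.

Lemma trace_form_nondegr v : (forall u, trace_form u v = 0) -> v = 0.
Proof.
case: sigma_nondeg => _ nondegr orth_v; apply: nondegr => u.
apply: trace_mul_nondeg => a; case: sigma_bil => _ _ <- _.
by apply/eqP; rewrite -trace_form_eq0 orth_v.
Qed.

Lemma Lclosed_orthr (X : {vspace V}) : Lclosed X -> Lclosed (orthr trace_form X).
Proof.
move=> cX a v /(orthrP trace_form_linl trace_form_linr) orth_v.
apply/(orthrP trace_form_linl trace_form_linr) => u uX.
by rewrite -trace_form_Lscale orth_v ?cX.
Qed.

Lemma Lclosed_orthl (X : {vspace V}) : Lclosed X -> Lclosed (orthl trace_form X).
Proof.
move=> cX a u /(orthlP trace_form_linl trace_form_linr) orth_u.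
apply/(orthlP trace_form_linl trace_form_linr) => v vX.
by rewrite trace_form_Lscale orth_u ?cX.
Qed.

Lemma is_dual_orthr (U W : {vspace V}) : is_dual sigma U W -> W = orthr trace_form U.
Proof.
move=> dualW; apply/vspaceP => v.
apply/idP/(orthrP trace_form_linl trace_form_linr) => [/dualW orth_v u|orth_v].
  by move/orth_v/eqP; rewrite -trace_form_eq0 => /eqP.
by apply/dualW => u /orth_v/eqP; rewrite trace_form_eq0 => /eqP.
Qed.

End TraceForm.

Lemma witnesses_card_lt (F : finFieldType) (L : fieldExtType F) (k : nat)
    (I : finType) (Z : {vspace Vk L k}) (P : I -> Vk L k -> bool) :
  (forall i, exists z, [/\ z \in Z, z != 0 & P i z]) ->
  (forall i j z, z \in Z -> z != 0 -> P i z -> P j z -> i = j) ->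
  (#|I| < #|F| ^ \dim Z)%N.
Proof.
move=> witness witness_uniq.
pose f i : finvect_type (Vk L k) :=
  odflt 0 [pick z : finvect_type (Vk L k) | [&& z \in Z, z != 0 & P i z]].
have fP i : [&& f i \in Z, f i != 0 & P i (f i)].
  rewrite /f; case: pickP => [z //|no_witness].
  by have [z [zZ z_neq0 Piz]] := witness i; have := no_witness z; rewrite zZ z_neq0 Piz.
have f_inj : injective f.
  move=> i j fij; have /and3P[fiZ fi_neq0 Pi] := fP i; have /and3P[_ _ Pj] := fP j.
  by apply: (witness_uniq i j (f i)); rewrite // fij.
rewrite -(card_vspace (Z : {vspace finvect_type (Vk L k)})) (cardD1 0) mem0v.
rewrite -(card_imset predT f_inj) add1n ltnS subset_leq_card //.
apply/subsetP => _ /imsetP[i _ ->].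
by have /and3P[fiZ fi_neq0 _] := fP i; rewrite !inE fi_neq0.
Qed.

Section Pencil.
Variables (F : finFieldType) (L : fieldExtType F) (k : nat).
Local Notation V := (Vk L k).
Variables (T : {vspace V}) (v1 v2 : V).
Hypotheses (cT : Lclosed T) (v1T : v1 \notin T) (v2T : v2 \notin (T + Lline v1)%VS).

Lemma Lscale_indep x y : Lscale x v1 + Lscale y v2 \in T -> x = 0 /\ y = 0.
Proof.
move=> combT; have [y0|y_neq0] := eqVneq y 0.
  move: combT; rewrite y0 Lscale0 addr0; have [//|x_neq0] := eqVneq x 0.
  by rewrite Lclosed_Lscale // (negbTE v1T).
move: v2T.
have -> : v2 = Lscale y^-1 (Lscale x v1 + Lscale y v2) + Lscale (- (y^-1 * x)) v1.
  by rewrite LscaleDr !LscaleA mulVf // Lscale1 LscaleN addrC addKr.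
by rewrite memv_add ?cT ?Lline_id //; apply/LlineP; exists (- (y^-1 * x)).
Qed.

Lemma pencil_notin a : v2 + Lscale a v1 \notin T.
Proof.
apply/negP; rewrite -[v2]Lscale1 addrC => /Lscale_indep[_ /eqP].
by rewrite oner_eq0.
Qed.

Lemma pencil_inj (a b : L) z : z \notin T ->
  z \in (T + Lline (v2 + Lscale a v1)%R)%VS ->
  z \in (T + Lline (v2 + Lscale b v1)%R)%VS -> a = b.
Proof.
move=> zT /memv_addP[t tT [_ /LlineP[c ->] Ez]].
move=> /memv_addP[t' t'T [_ /LlineP[c' ->] Ez']].
have := @Lscale_indep (c' * b - c * a) (c' - c).
have -> : Lscale (c' * b - c * a) v1 + Lscale (c' - c) v2 = t - t'.
  apply/ffunP => i; have := congr1 (fun w : V => w i) (etrans (esym Ez) Ez').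
  rewrite !ffunE => /(canRL (addrK _)) ->; ring.
case=> [|eq_b eq_c]; first exact: memvB.
have {}eq_c : c' = c by apply/eqP; rewrite -subr_eq0 eq_c.
have [c0|c_neq0] := eqVneq c 0; first by move: zT; rewrite Ez c0 Lscale0 addr0 tT.
apply/eqP; move: eq_b; rewrite eq_c -mulrBr => /eqP.
by rewrite mulf_eq0 (negbTE c_neq0) subr_eq0 eq_sym.
Qed.

End Pencil.

Lemma cutting_witness (F : finFieldType) (L : fieldExtType F) (k : nat)
    (W T H : {vspace Vk L k}) :
  cutting W -> Lclosed T -> Lclosed H -> Ldim_eq H (k%:Z - 1) ->
  (T <= H)%VS -> ~~ (H <= T)%VS ->
  exists z, [/\ z \in (W :\: T)%VS, z != 0 & z \in H].
Proof.
move=> cutW cT cH dimH sTH nHT; have [_ _ minH] := cutW H cH dimH.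
have /subvPn[z' /memv_capP[z'H z'W] z'T] : ~~ (H :&: W <= T)%VS.
  by apply: contra nHT; apply: minH cT.
move: z'W; rewrite -{1}(addv_diff_cap W T) => /memv_addP[z zZ [t /memv_capP[_ tT] Ez']].
have zT : z \notin T by apply: contra z'T => zT; rewrite Ez' memvD.
exists z; split => //; first by apply: contraNneq zT => ->; rewrite mem0v.
by rewrite -(addrK t z) -Ez' memvB // (subvP sTH).
Qed.

Section Duality.
Variables (F : finFieldType) (L : fieldExtType F) (k : nat).
Local Notation V := (Vk L k).
Local Notation m := (\dim {:L}).
Local Notation n := ((k * m)./2).
Variables (sigma : V -> V -> L) (U W : {vspace V}).
Hypotheses (sigma_bil : Lbilinear sigma) (sigma_nondeg : nondeg_form sigma).
Hypotheses (km_even : ~~ odd (k * m)) (dimU : \dim U = n).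
Hypothesis dualW : is_dual sigma U W.

Local Notation orth := (orthr (trace_form sigma)).
Local Notation lorth := (orthl (trace_form sigma)).
Let linl := trace_form_linl sigma_bil.
Let linr := trace_form_linr sigma_bil.
Let nondegl := trace_form_nondegl sigma_bil sigma_nondeg.
Let nondegr := trace_form_nondegr sigma_bil sigma_nondeg.
Let W_orth : W = orth U := is_dual_orthr sigma_bil dualW.

Let m_gt0 : (0 < m)%N := adim_gt0 (aspacef L).

Let km_half : (k * m = n + n)%N.
Proof. by rewrite -{1}(odd_double_half (k * m)) (negbTE km_even) add0n addnn. Qed.

Let dim_le (X : {vspace V}) : (\dim X <= k * m)%N.
Proof. by rewrite -dimVk dimvS ?subvf. Qed.

Let dim_orth (X : {vspace V}) : \dim (orth X) = (k * m - \dim X)%N.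
Proof. by rewrite -dimVk; apply: dim_orthr. Qed.

Let dim_lorth (X : {vspace V}) : \dim (lorth X) = (k * m - \dim X)%N.
Proof. by rewrite -dimVk; apply: dim_orthl. Qed.

Lemma dim_dual : \dim W = n.
Proof. rewrite W_orth dim_orth dimU; have := km_half; lia. Qed.

Lemma dim_dual_cap_orthr (H : {vspace V}) :
  (\dim (W :&: orth H) + \dim (U + H) = k * m)%N.
Proof.
have -> : (W :&: orth H)%VS = orth (U + H) by rewrite W_orth orthr_add.
by rewrite dim_orth subnK ?dim_le.
Qed.

Lemma dual_spans_full : (0 < k)%N -> is_Lspan U fullv -> scattered U ->
  is_Lspan W fullv.
Proof.
move=> k_gt0 U_Lspan scU; split; [exact: Lclosedf | exact: subvf | move=> H cH sWH].
apply: contraT => nH.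
have sXU : (lorth H <= U)%VS.
  by rewrite -(orthrK linl linr nondegl nondegr U) -W_orth orthlS.
have /subvPn[v vX] : ~~ (lorth H <= 0)%VS.
  apply: contra nH => /dimvS; rewrite dimv0 leqn0 dim_lorth subn_eq0.
  by move=> dimH; rewrite -(dimv_leqif_sup (subvf H)).2 eqn_leq dimvS ?subvf // dimVk.
rewrite memv0 => v_neq0.
have m1 : m = 1%N.
  have := scU (Lline v) (@Lclosed_Lline _ _ _ v) (proj2 (Ldim_eq_nat _ 1) _).
  rewrite (capv_idPr (subv_trans (Lline_sub (Lclosed_orthl sigma_bil cH) vX) sXU)).
  by rewrite dim_Lline // mul1n => /(_ erefl); lia.
have [_ _ /(_ U (Lclosed_extdeg1 (X := U) m1) (subvv U)) /dimvS] := U_Lspan.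
by rewrite dimVk dimU; move: km_half; rewrite m1 muln1; lia.
Qed.

Lemma evasive_dual_of_evasive2 :
  evasive U 2 (m%:Z - 1) -> evasive W (k%:Z - 2) (n%:Z - m%:Z - 1).
Proof.
move=> evU T cT /Ldim_eq_subn dimT.
have dimH : \dim (lorth T) = (2 * m)%N.
  by rewrite dim_lorth; lia.
have := evU _ (Lclosed_orthl sigma_bil cT) (proj2 (Ldim_eq_nat _ 2) dimH).
have := dim_dual_cap_orthr (lorth T); rewrite (orthlK linl linr nondegl nondegr).
have := dimv_sum_cap U (lorth T); rewrite dimU dimH; have := km_half; lia.
Qed.

Lemma evasive2_of_evasive_dual :
  evasive W (k%:Z - 2) (n%:Z - m%:Z - 1) -> evasive U 2 (m%:Z - 1).
Proof.
move=> evW H cH /Ldim_eq_nat dimH.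
have dimT : (\dim (orth H) + 2 * m = k * m)%N.
  by rewrite dim_orth -dimH subnK ?dim_le.
have := evW _ (Lclosed_orthr sigma_bil cH) (proj2 (Ldim_eq_subn _ k 2) dimT).
have := dim_dual_cap_orthr H; have := dimv_sum_cap U H.
rewrite dimU dimH; have := km_half; lia.
Qed.

Lemma cutting_of_evasive_dual :
  evasive W (k%:Z - 2) (n%:Z - m%:Z - 1) -> cutting W.
Proof.
move=> evW H cH /Ldim_eq_subn; rewrite mul1n => dimH.
split; [exact: cH | exact: capvSl | move=> H' cH' sHWH'; apply: contraT => nHH'].
have cS := Lclosed_cap cH cH'.
have sSH := capvSl H H'.
have ltS : (\dim (H :&: H') + m <= \dim H)%N.
  by apply: Lclosed_proper_dim; rewrite // subv_cap subvv.
have [i dimS] := dvdnP (Lclosed_dvd_dim cS).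
have le_ik : (i.+2 <= k)%N by rewrite -(leq_pmul2r m_gt0) !mulSn; lia.
have [|T [cT sST _ dimT]] := Lclosed_extend (j := (k - 2 - i)%N) cS cH sSH.
  by rewrite dimS -mulnDl subnKC ?mulnBl; lia.
have dimT' : (\dim T + 2 * m = k * m)%N.
  by rewrite dimT dimS -!mulnDl; congr (_ * _); lia.
have capWT := evW T cT (proj2 (Ldim_eq_subn T k 2) dimT').
have sWHT : (W :&: H <= W :&: T)%VS.
  by rewrite subv_cap capvSl (subv_trans _ sST) // subv_cap capvSr capvC.
have := dimvS sWHT; have := dimv_sum_cap W H; have := dim_le (W + H).
by rewrite dim_dual; move: capWT; have := km_half; lia.
Qed.

Lemma evasive_dual_of_cutting :
  cutting W -> evasive W (k%:Z - 2) (n%:Z - m%:Z - 1).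
Proof.
move=> cutW T cT /Ldim_eq_subn dimT; rewrite leNgt; apply/negP => capWT.
have /subvPn[v1 _ v1T] : ~~ (fullv <= T)%VS.
  by apply/negP => /dimvS; rewrite dimVk; lia.
have /subvPn[v2 _ v2T] : ~~ (fullv <= T + Lline v1)%VS.
  by apply/negP => /dimvS; rewrite dimVk dim_add_Lline //; lia.
have witness (a : finvect_type L) :
    exists z, [/\ z \in (W :\: T)%VS, z != 0
                & z \in (T + Lline (v2 + Lscale a v1)%R)%VS].
  apply: (cutting_witness cutW cT); first exact/Lclosed_add/Lclosed_Lline.
  - by apply/Ldim_eq_subn; rewrite dim_add_Lline ?pencil_notin //; lia.
  - exact: addvSl.
  - apply/subvPn; exists (v2 + Lscale a v1); last exact: pencil_notin.
    by rewrite (subvP (addvSr _ _)) ?Lline_id.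
have notinT z : z \in (W :\: T)%VS -> z != 0 -> z \notin T.
  by move=> zZ; apply: contraNN => zT; rewrite -memv0 -(capv_diff W T) memv_cap zZ.
have := witnesses_card_lt witness
  (fun a b z zZ z_neq0 => pencil_inj cT v1T v2T (notinT z zZ z_neq0)).
rewrite card_finvect_L ltn_exp2l ?finNzRing_gt1 // => ltZ.
by have := dimv_cap_compl W T; rewrite dim_dual; lia.
Qed.

End Duality.

Theorem proposition3p9 (F : finFieldType) (L : fieldExtType F) (k : nat)
  (sigma : Vk L k -> Vk L k -> L) (U W : {vspace Vk L k}) :
  (0 < k)%N -> ~~ odd (k * extdeg L) ->
  Lbilinear sigma -> nondeg_form sigma ->
  is_system U (k * extdeg L)./2 -> scattered U ->
  is_dual sigma U W ->
  [<-> evasive U 2 ((extdeg L)%:Z - 1) ;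
       is_system W (k * extdeg L)./2 /\
         evasive W (k%:Z - 2) (((k * extdeg L)./2)%:Z - (extdeg L)%:Z - 1) ;
       is_system W (k * extdeg L)./2 /\ cutting W].
Proof.
move=> k_gt0 km_even sigma_bil sigma_nondeg [dimU U_Lspan] scU dualW.
have W_system : is_system W (k * extdeg L)./2.
  split; first exact: (dim_dual sigma_bil sigma_nondeg km_even dimU dualW).
  by apply: (dual_spans_full sigma_bil sigma_nondeg km_even dimU dualW).
have evW_evU := evasive2_of_evasive_dual sigma_bil sigma_nondeg km_even dimU dualW.
have evU_evW := evasive_dual_of_evasive2 sigma_bil sigma_nondeg km_even dimU dualW.
have evW_cutW := cutting_of_evasive_dual sigma_bil sigma_nondeg km_even dimU dualW.
have cutW_evW := evasive_dual_of_cutting sigma_bil sigma_nondeg km_even dimU dualW.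
tfae=> [evU | [_ evW] | [_ cutW]].
- by split; last exact: evU_evW.
- by split; last exact: evW_cutW.
- exact/evW_evU/cutW_evW.
Qed.
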